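(* Let $L\ge1$. On $\mathbb{C}^2_0\otimes(\mathbb{C}^2)^{\otimes L}$ define, for $\lambda\in\mathbb{C}$, the monodromy matrix $R_{0L}(\lambda)\cdots R_{01}(\lambda)$, written as a $2\times 2$ matrix in the auxiliary space $0$ as $\begin{pmatrix}A(\lambda)&B(\lambda)\\ C(\lambda)&D(\lambda)\end{pmatrix}$ with entries operators on $(\mathbb{C}^2)^{\otimes L}$, where $R_{0j}(\lambda)$ acts on the auxiliary space and site $j$ by the matrix $$R(\lambda)=\begin{pmatrix}\lambda+i/2&0&0&0\\0&\lambda-i/2&i&0\\0&i&\lambda-i/2&0\\0&0&0&\lambda+i/2\end{pmatrix}$$ in the basis $e_1\otimes e_1,e_1\otimes e_2,e_2\otimes e_1,e_2\otimes e_2$. Let $|0\rangle=e_1^{\otimes L}$. Let $\lambda_1^\epsilon,\lambda_2^\epsilon$ be functions of $\epsilon$ with $\lambda_1^\epsilon=i/2+O(\epsilon)$ and $\lambda_2^\epsilon=-i/2+O(\epsilon)$ as $\epsilon\to0$. Then, as $\epsilon\to 0$, $$B(\lambda_1^\epsilon)B(\lambda_2^\epsilon)|0\rangle=\begin{cases}O(\epsilon^L)&\text{if }\lambda_1^\epsilon-\lambda_2^\epsilon-i=O(\epsilon^L),\\ O(\lambda_1^\epsilon-\lambda_2^\epsilon-i)&\text{otherwise.}\end{cases}$$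
   Context: $e_1=(1,0)^T$, $e_2=(0,1)^T$ is the standard basis of $\mathbb{C}^2$. In $R_{0j}(\lambda)$ the first tensor factor is the auxiliary space $\mathbb{C}^2_0$ and the second is the $j$-th site of the chain; the product $R_{0L}\cdots R_{01}$ is an operator on $\mathbb{C}^2_0\otimes(\mathbb{C}^2)^{\otimes L}$, and $A,B,C,D$ are its matrix blocks with respect to the auxiliary space. *)

From HB Require Import structures.
From mathcomp Require Import all_boot all_order all_algebra.
From mathcomp Require Import complex.
Set Implicit Arguments. Unset Strict Implicit. Unset Printing Implicit Defensive.
Import Order.TTheory GRing.Theory Num.Theory.
Local Open Scope ring_scope.
Local Open Scope complex_scope.

Section XXZ.
Variable R : rcfType.
Local Notation C := R[i].

Definition e1 : 'I_2 := ord0.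
Definition e2 : 'I_2 := ord_max.

(* The R-matrix: (Rmat lam (a,s) (b,t)) is the entry in row e_a (x) e_s and
   column e_b (x) e_t, first factor = auxiliary space, second = site. *)
Definition Rmat (lam : C) (a s b t : 'I_2) : C :=
  if (a == b) && (s == t) then
    (if a == s then lam + 'i / 2%:R else lam - 'i / 2%:R)
  else if (a == t) && (s == b) then 'i else 0.

(* basis of (C^2)^{(x) L}: configurations s : 'I_L -> 'I_2 *)
Definition config (L : nat) := {ffun 'I_L -> 'I_2}.

(* vectors of (C^2)^{(x) L} and of C^2_0 (x) (C^2)^{(x) L} *)
Definition vec (L : nat) := config L -> C.
Definition avec (L : nat) := 'I_2 -> config L -> C.

Definition setsite L (s : config L) (j : 'I_L) (t : 'I_2) : config L :=
  [ffun k => if k == j then t else s k].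

Definition R0j L (lam : C) (j : 'I_L) (psi : avec L) : avec L :=
  fun a s => \sum_(b < 2) \sum_(t < 2)
     Rmat lam a (s j) b t * psi b (setsite s j t).

(* monodromy R_{0L}(lam) ... R_{01}(lam): R_{01} is applied first *)
Definition monodromy L (lam : C) (psi : avec L) : avec L :=
  foldl (fun phi j => R0j lam j phi) psi (enum 'I_L).

(* matrix block (a,b) of the monodromy w.r.t. the auxiliary space *)
Definition mblock L (a b : 'I_2) (lam : C) (v : vec L) : vec L :=
  monodromy lam (fun c s => if c == b then v s else 0) a.

Definition opA L := @mblock L e1 e1.
Definition opB L := @mblock L e1 e2.
Definition opC L := @mblock L e2 e1.
Definition opD L := @mblock L e2 e2.

Definition vac L : vec L := fun s => if s == [ffun=> e1] then 1 else 0.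

Definition bigO (f g : R -> C) : Prop :=
  exists K : R, exists2 d : R, 0 < d &
    forall e : R, 0 < `|e| < d -> `|f e| <= K%:C * `|g e|.

Definition bigOv L (f : R -> vec L) (g : R -> C) : Prop :=
  exists K : R, exists2 d : R, 0 < d &
    forall e : R, 0 < `|e| < d -> forall s : config L,
      `|f e s| <= K%:C * `|g e|.

End XXZ.
Arguments vac {R} L.

(* B(lam1) B(lam2)|0> is read off a double-row transfer matrix: the two
   monodromies act on two auxiliary spaces, their factors at distinct sites
   commute, so the product is a site-by-site product of 4 x 4 transfer
   matrices, indexed by the auxiliary pair (a, a') and the spin of the site.
   Write lam2 = u - i/2 and lam1 = u + i/2 + d, so that u = O(eps) and
   d = lam1 - lam2 - i.  The key observation is that after k sites the
   amplitudes c22, c11 and c21 + c12 are O(|d| + |u|^k), while c21 and c12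
   stay bounded: each step rewrites them as u * A + d * B, with A of the same
   order and B bounded.  At k = L this gives c11 = O(|d| + eps^L), which
   yields both cases of the theorem. *)
From HB Require Import structures.
From mathcomp Require Import all_boot all_order all_algebra.
From mathcomp Require Import complex.
From mathcomp Require Import ring lra.
From Stdlib Require Import FunctionalExtensionality.
Import Order.TTheory GRing.Theory Num.Theory Normc.
Local Open Scope ring_scope.
Local Open Scope complex_scope.

Set Implicit Arguments. Unset Strict Implicit. Unset Printing Implicit Defensive.

Section TwoAuxiliarySpaces.
Variables (R : rcfType) (L : nat).
Local Notation C := R[i].

Lemma setsite_eq (s : config L) j t : setsite s j t j = t.
Proof. by rewrite ffunE eqxx. Qed.

Lemma setsite_neq (s : config L) j t k : k != j -> setsite s j t k = s k.
Proof. by rewrite ffunE => /negbTE ->. Qed.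

Lemma setsite_setsite (s : config L) j t t' :
  setsite (setsite s j t) j t' = setsite s j t'.
Proof. by apply/ffunP=> k; rewrite !ffunE; case: (k == j). Qed.

Lemma setsiteC (s : config L) j k t t' : j != k ->
  setsite (setsite s j t) k t' = setsite (setsite s k t') j t.
Proof.
move=> njk; apply/ffunP=> m; rewrite !ffunE.
by case: (eqVneq m k) => [->|//]; rewrite eq_sym (negbTE njk).
Qed.

(* Vectors of C^2_A (x) C^2_B (x) (C^2)^{(x) L}, with two auxiliary spaces. *)
Definition avec2 := 'I_2 -> 'I_2 -> config L -> C.

Definition R0j_l (lam : C) (j : 'I_L) (P : avec2) : avec2 :=
  fun a a' => R0j lam j (fun b => P b a') a.

Definition R0j_r (lam : C) (j : 'I_L) (P : avec2) : avec2 :=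
  fun a => R0j lam j (P a).

Lemma R0jE (lam : C) (j : 'I_L) (psi : avec R L) a s : R0j lam j psi a s =
  \sum_(p : 'I_2 * 'I_2) Rmat lam a (s j) p.1 p.2 * psi p.1 (setsite s j p.2).
Proof. exact: pair_bigA. Qed.

Lemma R0j_lrC l1 l2 j k P : j != k ->
  R0j_l l1 j (R0j_r l2 k P) = R0j_r l2 k (R0j_l l1 j P).
Proof.
move=> njk; do 3!apply: functional_extensionality => ?.
rewrite /R0j_l /R0j_r R0jE [RHS]R0jE.
under eq_bigr do rewrite R0jE setsite_neq 1?eq_sym // big_distrr.
under [RHS]eq_bigr do rewrite R0jE setsite_neq // big_distrr.
rewrite exchange_big; apply: eq_bigr => p _; apply: eq_bigr => q _ /=.
by rewrite setsiteC // mulrCA.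
Qed.

Lemma foldl_R0j_l_r l1 l2 k (l : seq 'I_L) P : k \notin l ->
  foldl (fun P j => R0j_l l1 j P) (R0j_r l2 k P) l =
  R0j_r l2 k (foldl (fun P j => R0j_l l1 j P) P l).
Proof.
elim: l P => [|j l IH] P //=; rewrite inE negb_or => /andP[nkj nkl].
by rewrite R0j_lrC 1?eq_sym // IH.
Qed.

Lemma foldl_R0j_lr_interleave l1 l2 (l : seq 'I_L) P : uniq l ->
  foldl (fun P j => R0j_l l1 j P) (foldl (fun P j => R0j_r l2 j P) P l) l =
  foldl (fun P j => R0j_l l1 j (R0j_r l2 j P)) P l.
Proof.
elim/last_ind: l => [//|l k IH]; rewrite rcons_uniq => /andP[nkl ul].
by rewrite !foldl_rcons foldl_R0j_l_r // IH.
Qed.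

Lemma foldl_R0j_l lam (l : seq 'I_L) P a a' :
  foldl (fun P j => R0j_l lam j P) P l a a' =
  foldl (fun phi j => R0j lam j phi) (fun b => P b a') l a.
Proof. by elim: l P => [|j l IH] P //=; rewrite IH. Qed.

Lemma foldl_R0j_r lam (l : seq 'I_L) P a :
  foldl (fun P j => R0j_r lam j P) P l a =
  foldl (fun phi j => R0j lam j phi) (P a) l.
Proof. by elim: l P => [|j l IH] P //=; rewrite IH. Qed.

Lemma foldl_R0j0 lam (l : seq 'I_L) :
  foldl (fun phi j => R0j lam j phi) (fun _ _ => 0 : C) l = (fun _ _ => 0).
Proof.
elim: l => [//|j l IH] /=; rewrite -[RHS]IH; congr foldl.
do 2!apply: functional_extensionality => ?.
by rewrite R0jE big1 // => p _; rewrite mulr0.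
Qed.

End TwoAuxiliarySpaces.

Lemma sum_ord2 (R : rcfType) (F : 'I_2 -> R[i]) : \sum_(t < 2) F t = F e1 + F e2.
Proof. by rewrite big_ord_recl big_ord1; congr (F _ + F _); apply: val_inj. Qed.

Section DoubleRow.
Variables (R : rcfType) (L : nat) (lamA lamB : R[i]).
Local Notation C := R[i].

(* [transfer x c] updates the amplitudes [c a a'] of the auxiliary pair by one
   site that starts in e1 and ends in x; [amp s l] composes it along [l]. *)
Definition transfer (x : 'I_2) (c : 'I_2 -> 'I_2 -> C) a a' : C :=
  \sum_(b < 2) \sum_(t < 2) \sum_(b' < 2)
    Rmat lamA a x b t * (Rmat lamB a' t b' e1 * c b b').

Definition amp0 (a a' : 'I_2) : C := ((a == e2) && (a' == e2))%:R.

Definition amp (s : config L) (l : seq 'I_L) : 'I_2 -> 'I_2 -> C :=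
  foldl (fun c j => transfer (s j) c) amp0 l.

Definition vacuum_outside (s : config L) (l : seq 'I_L) :=
  [forall m, (m \notin l) ==> (s m == e1)].

Definition double_row (l : seq 'I_L) (P : avec2 R L) :=
  foldl (fun P j => R0j_l lamA j (R0j_r lamB j P)) P l.

Lemma amp_rcons s l j : amp s (rcons l j) = transfer (s j) (amp s l).
Proof. exact: foldl_rcons. Qed.

Lemma eq_amp (s s' : config L) l : {in l, s =1 s'} -> amp s l = amp s' l.
Proof.
elim/last_ind: l => [//|l j IH] ss'; rewrite !amp_rcons IH ?ss' ?mem_rcons ?mem_head //.
by move=> m ml; apply: ss'; rewrite mem_rcons inE ml orbT.
Qed.

Lemma vacuum_outside_setsite s l j t : j \notin l ->
  vacuum_outside (setsite s j t) l = (t == e1) && vacuum_outside s (rcons l j).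
Proof.
move=> jl; apply/forallP/andP => [H|[/eqP-> /forallP H] m].
- split; first by have := H j; rewrite jl setsite_eq.
  apply/forallP => m; rewrite mem_rcons inE negb_or; apply/implyP => /andP[mj ml].
  by have := H m; rewrite ml setsite_neq.
- have [->|mj] := eqVneq m j; first by rewrite setsite_eq implybT.
  by rewrite setsite_neq //; have := H m; rewrite mem_rcons inE (negbTE mj).
Qed.

Lemma R0j_lr_eq (j : 'I_L) (P : avec2 R L) a a' s :
  R0j_l lamA j (R0j_r lamB j P) a a' s =
  \sum_(b < 2) \sum_(t < 2) Rmat lamA a (s j) b t *
    \sum_(b' < 2) \sum_(t' < 2) Rmat lamB a' t b' t' * P b b' (setsite s j t').
Proof.
apply: eq_bigr => b _; apply: eq_bigr => t _; congr (_ * _).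
by apply: eq_bigr => b' _; apply: eq_bigr => t' _; rewrite setsite_eq setsite_setsite.
Qed.

Definition vac2 : avec2 R L := fun a a' s => amp0 a a' * vac L s.

Lemma vacuum_outside_nil s : vacuum_outside s [::] = (s == [ffun=> e1]).
Proof.
apply/forallP/eqP => [H|-> m]; last by rewrite ffunE eqxx.
by apply/ffunP => m; rewrite ffunE; apply/eqP; exact: H.
Qed.

Lemma double_row_amp l a a' s : uniq l ->
  double_row l vac2 a a' s = if vacuum_outside s l then amp s l a a' else 0.
Proof.
elim/last_ind: l a a' s => [|l j IH] a a' s.
  by rewrite /= vacuum_outside_nil /vac2 /vac; case: ifP; rewrite ?mulr1 ?mulr0.
rewrite rcons_uniq => /andP[jl ul].
have IHj b b' t : double_row l vac2 b b' (setsite s j t) =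
    if (t == e1) && vacuum_outside s (rcons l j) then amp s l b b' else 0.
  rewrite IH // vacuum_outside_setsite //; case: (_ && _) => //.
  by congr (_ _ _); apply: eq_amp => m ml; rewrite setsite_neq //; apply: contraNneq jl => <-.
rewrite /double_row foldl_rcons -/(double_row l vac2) R0j_lr_eq amp_rcons.
under eq_bigr do under eq_bigr do under eq_bigr do under eq_bigr do rewrite IHj.
case: (vacuum_outside s _); last first.
  by rewrite big1 // => b _; rewrite big1 // => t _; rewrite big1 ?mulr0 // => b' _;
    rewrite big1 // => t' _; rewrite andbF mulr0.
apply: eq_bigr => b _; apply: eq_bigr => t _; rewrite big_distrr.
by apply: eq_bigr => b' _; rewrite sum_ord2 /= mulr0 addr0.
Qed.

Lemma opB_opB_vac s :
  opB lamA (opB lamB (vac L)) s = amp s (enum 'I_L) e1 e1.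
Proof.
pose Y := foldl (fun P j => R0j_r lamB j P) vac2 (enum 'I_L).
rewrite {1}/opB {1}/mblock.
have -> : (fun c s => if c == e2 then opB lamB (vac L) s else 0) = (fun c => Y c e1).
  apply: functional_extensionality => c; rewrite /Y foldl_R0j_r.
  have [->|] := eqVneq c e2.
    congr (foldl _ _ _ _); do 2!apply: functional_extensionality => ?.
    by rewrite /vac2 /amp0 eqxx /=; case: eqP; rewrite ?mul1r ?mul0r.
  move=> ce2; suff -> : vac2 c = (fun _ _ => 0) by rewrite foldl_R0j0.
  by do 2!apply: functional_extensionality => ?; rewrite /vac2 /amp0 (negbTE ce2) mul0r.
rewrite /monodromy -foldl_R0j_l /Y foldl_R0j_lr_interleave ?enum_uniq //.
rewrite -/(double_row _ _) double_row_amp ?enum_uniq //.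
suff -> : vacuum_outside s (enum 'I_L) by [].
by apply/forallP => m; rewrite mem_enum.
Qed.

End DoubleRow.

Section NormcFacts.
Variable R : rcfType.

Lemma normc_ge0 (x : R[i]) : 0 <= normc x.
Proof. by case: x => ? ?; exact: sqrtr_ge0. Qed.

Lemma normc_i : normc ('i : R[i]) = 1.
Proof. by rewrite /normc expr0n expr1n add0r sqrtr1. Qed.

Lemma normcM_le (x y : R[i]) a b :
  normc x <= a -> normc y <= b -> normc (x * y) <= a * b.
Proof. by rewrite normcM; apply: ler_pM; exact: normc_ge0. Qed.

Lemma normcD_le (x y : R[i]) : normc (x + y) <= normc x + normc y.
Proof. exact: le_normcD. Qed.

Lemma normcB_le (x y : R[i]) : normc (x - y) <= normc x + normc y.
Proof. by rewrite -(normcN y) normcD_le. Qed.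

Lemma norm_normc (x : R[i]) : `|x| = (normc x)%:C.
Proof. by []. Qed.

Lemma normc_real (e : R) : normc e%:C = `|e|.
Proof. by rewrite /normc /= expr0n addr0 sqrtr_sqr. Qed.

Lemma normcX (x : R[i]) n : normc (x ^+ n) = normc x ^+ n.
Proof. by elim: n => [|n IH]; rewrite ?normc1 // !exprS normcM IH. Qed.

Lemma normc_le_scaled (x : R[i]) K e : `|x| <= K%:C * `|e%:C| -> normc x <= `|K| * `|e|.
Proof.
rewrite !norm_normc normc_real -rmorphM lecR => /le_trans; apply.
by apply: ler_wpM2r; [exact: normr_ge0 | exact: ler_norm].
Qed.

End NormcFacts.

Section Estimates.
Variables (R : rcfType) (u d : R[i]).
Local Notation T := (transfer (u + 'i / 2%:R + d) (u - 'i / 2%:R)).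

Lemma transfer_up c :
  [/\ T e1 c e2 e2 = (u + d) * (u - 'i) * c e2 e2,
      T e1 c e2 e1 = u * (u + d) * c e2 e1 - c e1 e2,
      T e1 c e1 e2 = (u + d + 'i) * (u - 'i) * c e1 e2 &
      T e1 c e1 e1 = (u + d + 'i) * u * c e1 e1].
Proof.
rewrite /transfer !sum_ord2 /Rmat /= -[Complex _ _]/('i%R : R[i]).
by split; rewrite ?mulrA -?expr2 ?sqrCi; field.
Qed.

Lemma transfer_down c :
  [/\ T e2 c e2 e2 = 0,
      T e2 c e2 e1 = 'i * (u + d + 'i) * c e2 e2,
      T e2 c e1 e2 = 'i * (u - 'i) * c e2 e2 &
      T e2 c e1 e1 = 'i * u * c e2 e1 + 'i * (u + d) * c e1 e2].
Proof.
rewrite /transfer !sum_ord2 /Rmat /= -[Complex _ _]/('i%R : R[i]).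
by split; [ring | field | field | field].
Qed.

Variable r : R.
Hypotheses (hu : normc u <= r) (hr : r <= 1) (hd : normc d <= 1).

Lemma r_ge0 : 0 <= r. Proof. exact: le_trans (normc_ge0 u) hu. Qed.

Lemma normc_u_le1 : normc u <= 1. Proof. exact: le_trans hu hr. Qed.

Lemma normc_addu_d : normc (u + d) <= 2.
Proof. by move: (normcD_le u d) normc_u_le1 hd; lra. Qed.

Lemma normc_subu_i : normc (u - 'i) <= 2.
Proof. by move: (normcB_le u 'i) normc_u_le1; rewrite normc_i; lra. Qed.

Lemma normc_addu_d_i : normc (u + d + 'i) <= 3.
Proof. by move: (normcD_le (u + d) 'i) normc_addu_d; rewrite normc_i; lra. Qed.

Lemma normc_mulu_add_muld (A B : R[i]) K Ka Kb P :
  0 <= P -> 0 <= Ka -> 0 <= Kb -> Ka + Kb <= K ->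
  normc A <= Ka * (normc d + P) -> normc B <= Kb ->
  normc (u * A + d * B) <= K * (normc d + r * P).
Proof.
move=> hP hKa hKb hK hA hB; apply: le_trans (normcD_le _ _) _; rewrite !normcM.
have hd0 := normc_ge0 d; have hu0 := normc_ge0 u; have hA0 := normc_ge0 A.
have h1 : normc u * normc A <= r * (Ka * (normc d + P)) by apply: ler_pM.
have h2 : normc d * normc B <= normc d * Kb by apply: ler_wpM2l.
have h3 : 0 <= Ka * (normc d * (1 - r)) by apply/mulr_ge0/mulr_ge0 => //; move: hr; lra.
have h4 : 0 <= Kb * (r * P) by apply/mulr_ge0/mulr_ge0; rewrite ?r_ge0.
have h5 : (Ka + Kb) * (normc d + r * P) <= K * (normc d + r * P).
  by apply: ler_wpM2r => //; apply/addr_ge0/mulr_ge0; rewrite ?r_ge0.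
move: hr; lra.
Qed.

Definition amp_bounds (K P : R) (c : 'I_2 -> 'I_2 -> R[i]) :=
  [/\ normc (c e2 e2) <= K * (normc d + P), normc (c e1 e1) <= K * (normc d + P),
      normc (c e2 e1 + c e1 e2) <= K * (normc d + P),
      normc (c e2 e1) <= K & normc (c e1 e2) <= K].

Lemma amp_bounds_e2e2 K P c : 0 <= K -> P <= 1 -> amp_bounds K P c ->
  normc (c e2 e2) <= 2 * K.
Proof.
move=> hK hP [h22 _ _ _ _]; apply: le_trans h22 _; rewrite mulrC.
by apply: ler_wpM2r => //; move: hd hP; lra.
Qed.

Lemma transfer_up_bounds K P c : 0 <= K -> 0 <= P <= 1 -> amp_bounds K P c ->
  amp_bounds (6 * K) (r * P) (T e1 c).
Proof.
move=> hK /andP[hP0 hP1] bc; have b22 := amp_bounds_e2e2 hK hP1 bc.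
case: bc => h22 h11 hs h21 h12; rewrite /amp_bounds; have [-> -> -> ->] := transfer_up c.
have hu1 := normc_u_le1; have hud := normc_addu_d.
have hui := normc_subu_i; have hudi := normc_addu_d_i.
split.
- have -> : (u + d) * (u - 'i) * c e2 e2 =
     u * ((u - 'i) * c e2 e2) + d * ((u - 'i) * c e2 e2) by ring.
  apply: (normc_mulu_add_muld (Ka := 2 * K) (Kb := 2 * (2 * K))) => //; try lra.
    by rewrite -mulrA; apply: normcM_le.
  exact: normcM_le.
- have -> : (u + d + 'i) * u * c e1 e1 = u * ((u + d + 'i) * c e1 e1) + d * 0 by ring.
  apply: (normc_mulu_add_muld (Ka := 3 * K) (Kb := 0)) => //; try lra.
    by rewrite -mulrA; apply: normcM_le.
  by rewrite normc0.
- have -> : u * (u + d) * c e2 e1 - c e1 e2 + (u + d + 'i) * (u - 'i) * c e1 e2 =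
     u * ((u + d) * (c e2 e1 + c e1 e2)) + d * (- 'i * c e1 e2).
    by rewrite -[- c e1 e2]mulN1r -sqrCi; ring.
  apply: (normc_mulu_add_muld (Ka := 2 * K) (Kb := 1 * K)) => //; try lra.
    by rewrite -mulrA; apply: normcM_le.
  by apply: normcM_le; rewrite // normcN normc_i.
- apply: le_trans (normcB_le _ _) _.
  have : normc (u * (u + d) * c e2 e1) <= 1 * 2 * K.
    by apply: normcM_le => //; apply: normcM_le.
  lra.
- have : normc ((u + d + 'i) * (u - 'i) * c e1 e2) <= 3 * 2 * K.
    by apply: normcM_le => //; apply: normcM_le.
  lra.
Qed.

Lemma transfer_down_bounds K P c : 0 <= K -> 0 <= P <= 1 -> amp_bounds K P c ->
  amp_bounds (6 * K) (r * P) (T e2 c).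
Proof.
move=> hK /andP[hP0 hP1] bc; have b22 := amp_bounds_e2e2 hK hP1 bc.
case: bc => h22 h11 hs h21 h12; rewrite /amp_bounds; have [-> -> -> ->] := transfer_down c.
have hu1 := normc_u_le1; have hud := normc_addu_d.
have hui := normc_subu_i; have hudi := normc_addu_d_i.
have hi : normc ('i : R[i]) <= 1 by rewrite normc_i.
have hr0 := r_ge0.
split.
- rewrite normc0; apply/mulr_ge0/addr_ge0; rewrite ?normc_ge0 //; first lra.
  exact: mulr_ge0.
- have -> : 'i * u * c e2 e1 + 'i * (u + d) * c e1 e2 =
     u * ('i * (c e2 e1 + c e1 e2)) + d * ('i * c e1 e2) by ring.
  apply: (normc_mulu_add_muld (Ka := 1 * K) (Kb := 1 * K)) => //; try lra.
    by rewrite -mulrA; apply: normcM_le.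
  exact: normcM_le.
- have -> : 'i * (u + d + 'i) * c e2 e2 + 'i * (u - 'i) * c e2 e2 =
     u * ('i * c e2 e2 + 'i * c e2 e2) + d * ('i * c e2 e2) by ring.
  have hic : normc ('i * c e2 e2) <= 1 * (K * (normc d + P)) by apply: normcM_le.
  apply: (normc_mulu_add_muld (Ka := 2 * K) (Kb := 1 * (2 * K))) => //; try lra.
    by move: (normcD_le ('i * c e2 e2) ('i * c e2 e2)) hic; lra.
  exact: normcM_le.
- have : normc ('i * (u + d + 'i) * c e2 e2) <= 1 * 3 * (2 * K).
    by apply: normcM_le => //; apply: normcM_le.
  lra.
- have : normc ('i * (u - 'i) * c e2 e2) <= 1 * 2 * (2 * K).
    by apply: normcM_le => //; apply: normcM_le.
  lra.
Qed.

Lemma transfer_bounds x K P c : 0 <= K -> 0 <= P <= 1 -> amp_bounds K P c ->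
  amp_bounds (6 * K) (r * P) (T x c).
Proof.
have [->|->] : x = e1 \/ x = e2 by case: x => [[|[|//]]] ?; [left | right]; apply: val_inj.
  exact: transfer_up_bounds.
exact: transfer_down_bounds.
Qed.

Lemma amp_bounds_amp L (s : config L) l :
  amp_bounds (6 ^+ size l) (r ^+ size l) (amp (u + 'i / 2%:R + d) (u - 'i / 2%:R) s l).
Proof.
have hr0 := r_ge0; elim/last_ind: l => [|l j IH].
  have n0 := normc_ge0 d.
  have e12 : (e1 == e2) = false by [].
  rewrite /amp_bounds /amp /foldl /amp0 eqxx e12 !andbT !andbF mulr1n !mulr0n.
  rewrite !expr0 !mul1r addr0 normc1 normc0.
  by split => //; lra.
rewrite amp_rcons size_rcons !exprS; apply: transfer_bounds => //.
  exact: exprn_ge0.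
by rewrite exprn_ge0 ?exprn_ile1.
Qed.

Lemma normc_opB_opB_vac L (s : config L) :
  normc (opB (u + 'i / 2%:R + d) (opB (u - 'i / 2%:R) (vac L)) s) <=
    6 ^+ L * (normc d + r ^+ L).
Proof.
rewrite opB_opB_vac.
by have [_ + _ _ _] := amp_bounds_amp s (enum 'I_L); rewrite size_enum_ord.
Qed.

End Estimates.

Section Asymptotics.
Variable R : rcfType.

Lemma bigO_refl (g : R -> R[i]) : bigO g g.
Proof. by exists 1; exists 1 => // e _; rewrite rmorph1 mul1r. Qed.

Lemma bigOv_add L (v : R -> vec R L) (f1 f2 g : R -> R[i]) K d0 : 0 <= K -> 0 < d0 ->
  (forall e, 0 < `|e| < d0 -> forall s, `|v e s| <= K%:C * (`|f1 e| + `|f2 e|)) ->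
  bigO f1 g -> bigO f2 g -> bigOv v g.
Proof.
move=> hK hd0 hv [K1 [d1 hd1 h1]] [K2 [d2 hd2 h2]].
exists (K * (K1 + K2)); exists (Order.min d0 (Order.min d1 d2)).
  by rewrite !lt_min hd0 hd1 hd2.
move=> e /andP[he]; rewrite !lt_min => /andP[ed0 /andP[ed1 ed2]] s.
apply: le_trans (hv e _ s) _; first by rewrite he.
rewrite rmorphM rmorphD -mulrA ler_wpM2l ?ler0c // mulrDl.
by apply: lerD; [apply: h1 | apply: h2]; rewrite he.
Qed.

Lemma opB_opB_vac_bigO L (lam1 lam2 : R -> R[i]) :
  bigO (fun e => lam1 e - 'i / 2%:R) (fun e => e%:C) ->
  bigO (fun e => lam2 e + 'i / 2%:R) (fun e => e%:C) ->
  exists2 K, 0 <= K & exists2 d0, 0 < d0 & forall e, 0 < `|e| < d0 -> forall s,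
    `|opB (lam1 e) (opB (lam2 e) (vac L)) s| <=
      K%:C * (`|lam1 e - lam2 e - 'i| + `|e%:C ^+ L|).
Proof.
case=> K1 [d1 hd1 h1] [K2 [d2 hd2 h2]].
set M := `|K1| + `|K2| + 1.
have hK1 := normr_ge0 K1; have hK2 := normr_ge0 K2.
have hM : 1 <= M by rewrite /M; lra.
exists ((6 * M) ^+ L); first by rewrite exprn_ge0 // mulr_ge0 //; lra.
exists (Order.min (Order.min d1 d2) M^-1); first by rewrite !lt_min hd1 hd2 invr_gt0; lra.
move=> e /andP[he]; rewrite !lt_min => /andP[/andP[ed1 ed2] eM] s.
set u := lam2 e + 'i / 2%:R; set d := lam1 e - lam2 e - 'i.
have he0 := normr_ge0 e.
have hMe : M * `|e| <= 1.
  by apply/ltW; rewrite -ltr_pdivlMl ?mulr1 //; lra.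
have /h1/normc_le_scaled hl1 : 0 < `|e| < d1 by rewrite he.
have /h2/normc_le_scaled hl2 : 0 < `|e| < d2 by rewrite he.
have hu : normc u <= M * `|e|.
  by move: hl2 (mulr_ge0 hK1 he0); rewrite -/u /M !mulrDl mul1r; lra.
have hd : normc d <= M * `|e|.
  have -> : d = (lam1 e - 'i / 2%:R) - u.
    by rewrite /d /u; field.
  by move: (normcB_le (lam1 e - 'i / 2%:R) u) hl1 hu; rewrite /M !mulrDl mul1r; lra.
have := normc_opB_opB_vac hu hMe (le_trans hd hMe) s.
rewrite (_ : u + _ + d = lam1 e); last by rewrite /u /d; field.
rewrite (_ : u - _ = lam2 e); last by rewrite /u; ring.
rewrite !norm_normc normcX normc_real -rmorphD -rmorphM lecR => /le_trans; apply.
rewrite !exprMn -mulrA ler_wpM2l ?exprn_ge0 //.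
by move: (ler_peMl (normc_ge0 d) (exprn_ege1 L hM)); lra.
Qed.

End Asymptotics.

Theorem lemma3 (R : rcfType) (L : nat) (hL : (0 < L)%N)
  (lam1 lam2 : R -> R[i])
  (h1 : bigO (fun e => lam1 e - 'i / 2%:R) (fun e => e%:C))
  (h2 : bigO (fun e => lam2 e + 'i / 2%:R) (fun e => e%:C)) :
  let v := fun e => opB (lam1 e) (opB (lam2 e) (vac L)) in
  let d := fun e => lam1 e - lam2 e - 'i in
  (bigO d (fun e => e%:C ^+ L) -> bigOv v (fun e => e%:C ^+ L)) /\
  (bigO (fun e => e%:C ^+ L) d -> bigOv v d).
Proof.
move=> v d; have [K hK [d0 hd0 hv]] := opB_opB_vac_bigO L h1 h2.
by split=> hd; apply: (bigOv_add hK hd0 hv) => //; exact: bigO_refl.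
Qed.
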